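(* Let $X\in L^2(\mathbb{R}^2)$ and suppose there is a nonzero $v\in L^2(\mathbb{R})$ with $\langle v,\mathcal{T}_Xv\rangle\ge0$. Then the problem $\min_{u\in L^2(\mathbb{R})}\frac12\|X-uu^*\|_{L^2(\mathbb{R}^2)}^2$ is equivalent to the problem $\max_{\|u\|_{L^2(\mathbb{R})}=1}\langle u,(\mathcal{T}_X+\mathcal{T}_X^* )u\rangle$; precisely, if $u$ is an optimal solution of the second problem, then $\big(\tfrac12\langle u,(\mathcal{T}_X+\mathcal{T}_X^* )u\rangle\big)uu^*$ is an optimal solution of the first problem (i.e., it equals $ww^*$ for a minimizer $w$ of the first problem).
   Context: For $X\in L^2(\mathbb{R}^2)$, $\mathcal{T}_X:L^2(\mathbb{R})\to L^2(\mathbb{R})$ is $\mathcal{T}_X[u](s)=\int_{\mathbb{R}}X(s,t)u(t)\,dt$, and $\mathcal{T}_X^*$ is its adjoint, $\mathcal{T}_X^*[u](t)=\int_{\mathbb{R}}X(s,t)u(s)\,ds$. For $u\in L^2(\mathbb{R})$, $uu^*$ is the function $(s,t)\mapsto u(s)u(t)$. *)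

From HB Require Import structures.
From mathcomp Require Import all_boot all_order all_algebra.
From mathcomp Require Import all_classical all_reals all_analysis.
Set Implicit Arguments. Unset Strict Implicit. Unset Printing Implicit Defensive.
Import Order.TTheory GRing.Theory Num.Theory.
Import numFieldNormedType.Exports.
Local Open Scope classical_set_scope.
Local Open Scope ring_scope.

Section L2defs.
Variable R : realType.
Local Notation mu := (@lebesgue_measure R).
Definition mu2 := (mu \x mu)%E.

Definition L2 (u : R -> R) : Prop :=
  measurable_fun setT u /\ mu.-integrable setT (fun x => ((u x) ^+ 2)%:E).

Definition L2_2 (X : R * R -> R) : Prop :=
  measurable_fun setT X /\ mu2.-integrable setT (fun p => ((X p) ^+ 2)%:E).

Definition ip (u v : R -> R) : R := Rintegral mu setT (fun x => u x * v x).

Definition nrm2 (u : R -> R) : R := ip u u.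

Definition TX (X : R * R -> R) (u : R -> R) : R -> R :=
  fun s => Rintegral mu setT (fun t => X (s, t) * u t).

Definition TXadj (X : R * R -> R) (u : R -> R) : R -> R :=
  fun t => Rintegral mu setT (fun s => X (s, t) * u s).

Definition outer (u : R -> R) : R * R -> R := fun p => u p.1 * u p.2.

Definition obj1 (X : R * R -> R) (u : R -> R) : R :=
  2^-1 * Rintegral mu2 setT (fun p => (X p - outer u p) ^+ 2).

Definition obj2 (X : R * R -> R) (u : R -> R) : R :=
  ip u (fun s => TX X u s + TXadj X u s).
End L2defs.

From Pilot Require Import Defs.
From HB Require Import structures.
From mathcomp Require Import all_boot all_order all_algebra.
From mathcomp Require Import all_classical all_reals all_analysis.
From mathcomp Require Import lra ring measurable_realfun.
Set Implicit Arguments. Unset Strict Implicit. Unset Printing Implicit Defensive.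
Import Order.TTheory GRing.Theory Num.Theory.
Local Open Scope classical_set_scope.
Local Open Scope ring_scope.

(* Write B(u) = \int\int X(s,t) u(s) u(t) ds dt.  By Fubini, <u, T_X u> and
   <u, T_X^* u> both equal B(u), so the second objective is 2 B(u), while
   expanding the square gives 1/2 ||X - uu^*||^2 = 1/2 ||X||^2 - B(u) + 1/2 ||u||^4.
   Since B is homogeneous of degree 2, a maximizer u of B on the unit sphere
   satisfies B(y) <= ||y||^2 l with l = B(u), and l >= 0 because B(v) >= 0 for
   some v <> 0.  Hence for every y
     1/2 ||X - yy^*||^2 >= 1/2 ||X||^2 - 1/2 l^2 + 1/2 (||y||^2 - l)^2,
   and the lower bound 1/2 ||X||^2 - 1/2 l^2 is attained at w = sqrt(l) u,
   for which ww^* = l uu^*. *)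

Section fine_lemmas.
Context {R : realType}.
Local Open Scope ereal_scope.

Lemma fine_EFinMB (r : R) (a b : \bar R) : (0 <= r)%R -> 0 <= a -> 0 <= b ->
  fine (r%:E * a - r%:E * b) = (r * fine (a - b))%R.
Proof.
move=> r0; have [->|r_neq0] := eqVneq r 0%R; first by rewrite !mul0e mul0r sube0.
have r_gt0 : (0 < r)%R by rewrite lt_def r_neq0 r0.
case: a b => [a| |] [b| |] //= _ _; first by rewrite mulrBr.
all: by rewrite mulry gtr0_sg // mul1e /= mulr0.
Qed.

Lemma fine_subeC (a b : \bar R) : 0 <= a -> 0 <= b -> fine (b - a) = (- fine (a - b))%R.
Proof. by case: a b => [a| |] [b| |] //= _ _; rewrite ?opprB ?oppr0. Qed.

Lemma abse_fine_le (e : \bar R) : `|(fine e)%:E| <= `|e|.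
Proof. by case: e => [r| |] //=; rewrite leey. Qed.

End fine_lemmas.

Section integral_lemmas.
Context d (T : measurableType d) (R : realType) (mu : {measure set T -> \bar R}).

(* Unlike RintegralZl, no integrability is needed: if the integral of f is
   infinite or undefined, both sides are 0. *)
Lemma RintegralZl_measurable (D : set T) (f : T -> R) (r : R) :
  measurable D -> measurable_fun D f ->
  \int[mu]_(x in D) (r * f x) = r * \int[mu]_(x in D) f x.
Proof.
move=> mD mf; have mfE : measurable_fun D (EFin \o f) by apply/measurable_EFinP.
have fpos_ge0 : (0 <= \int[mu]_(x in D) (EFin \o f)^\+ x)%E by exact: integral_ge0.
have fneg_ge0 : (0 <= \int[mu]_(x in D) (EFin \o f)^\- x)%E by exact: integral_ge0.
rewrite /Rintegral; under eq_integral do rewrite EFinM.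
rewrite integralE [in RHS]integralE.
have [r_ge0|r_lt0] := leP 0 r.
- rewrite ge0_funeposM // ge0_funenegM //.
  rewrite (ge0_integralZl_EFin _ _ _ (measurable_funepos mfE)) //.
  by rewrite (ge0_integralZl_EFin _ _ _ (measurable_funeneg mfE)) // fine_EFinMB.
- have Nr_ge0 : 0 <= - r by rewrite oppr_ge0 ltW.
  rewrite le0_funeposM ?ltW // le0_funenegM ?ltW // -EFinN.
  rewrite (ge0_integralZl_EFin _ _ _ (measurable_funeneg mfE)) //.
  rewrite (ge0_integralZl_EFin _ _ _ (measurable_funepos mfE)) //.
  by rewrite fine_EFinMB // fine_subeC // mulrNN.
Qed.

Lemma integral_fine_EFin (D : set T) (g : T -> \bar R) :
  measurable D -> mu.-integrable D g ->
  (\int[mu]_(x in D) (fine (g x))%:E = \int[mu]_(x in D) g x)%E.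
Proof.
move=> mD ig; have mg := measurable_int _ ig.
apply: ae_eq_integral => //; first by apply/measurable_EFinP; exact: measurableT_comp.
by apply: filterS (integrable_ae mD ig) => x gx Dx; exact/fineK/gx.
Qed.

End integral_lemmas.

Section Rintegral_fubini.
Context {d1 d2} {T1 : measurableType d1} {T2 : measurableType d2} {R : realType}.
Context {m1 : {sigma_finite_measure set T1 -> \bar R}}
        {m2 : {sigma_finite_measure set T2 -> \bar R}} {F : T1 * T2 -> R}.
Hypothesis iF : (m1 \x m2)%E.-integrable setT (EFin \o F).

Let mF : measurable_fun setT (EFin \o F). Proof. exact: measurable_int _ iF. Qed.

Let integrable_fubini_G : m2.-integrable setT (fubini_G m1 (EFin \o F)).
Proof.
apply/integrableP; split; first exact: measurable_fubini_G iF.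
apply: (le_lt_trans _ ((integrable21ltyP m1 m2 mF).1 iF)).
have mFabs : measurable_fun setT (abse \o (EFin \o F)) by exact: measurableT_comp.
apply: ge0_le_integral => //.
- by apply: measurableT_comp => //; exact: measurable_fubini_G iF.
- exact: (measurable_fun_fubini_tonelli_G _ mFabs (fun _ => abse_ge0 _)).
- by move=> y _; apply: le_abse_integral => //; exact: measurableT_comp mF _.
Qed.

Lemma integrable_Rintegral1 :
  m1.-integrable setT (EFin \o fun x => \int[m2]_y F (x, y)).
Proof.
apply: le_integrable (integrable_fubini_F iF) => //.
- by apply/measurable_EFinP/measurableT_comp => //; exact: measurable_fubini_F iF.
- by move=> x _; exact: abse_fine_le.
Qed.

Lemma integrable_Rintegral2 :
  m2.-integrable setT (EFin \o fun y => \int[m1]_x F (x, y)).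
Proof.
apply: le_integrable integrable_fubini_G => //.
- by apply/measurable_EFinP/measurableT_comp => //; exact: measurable_fubini_G iF.
- by move=> y _; exact: abse_fine_le.
Qed.

Lemma Rintegral12_prod_meas1 :
  \int[m1]_x \int[m2]_y F (x, y) = \int[(m1 \x m2)%E]_z F z.
Proof.
rewrite /Rintegral integral_fine_EFin //; last exact: integrable_fubini_F iF.
by congr fine; exact: integral12_prod_meas1 iF.
Qed.

Lemma Rintegral21_prod_meas1 :
  \int[m2]_y \int[m1]_x F (x, y) = \int[(m1 \x m2)%E]_z F z.
Proof.
rewrite /Rintegral integral_fine_EFin //.
by congr fine; exact: integral21_prod_meas1 iF.
Qed.

End Rintegral_fubini.

Lemma normrM_le_sqrD (R : realFieldType) (a b : R) : `|a * b| <= a ^+ 2 + b ^+ 2.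
Proof.
by have [ab0|ab0] := lerP 0 (a * b); [rewrite ger0_norm | rewrite ltr0_norm]; nra.
Qed.

Section L2_facts.
Context {R : realType}.
Local Notation mu := (@lebesgue_measure R).
Local Notation mu2 := (@mu2 R).

Lemma nrm2_ge0 (u : R -> R) : 0 <= nrm2 u.
Proof. by apply: Rintegral_ge0 => x _; rewrite -expr2 sqr_ge0. Qed.

Lemma L2_integral_sqr (u : R -> R) : L2 u -> (\int[mu]_x (u x ^+ 2)%:E)%E = (nrm2 u)%:E.
Proof.
move=> [_ iu2]; rewrite /nrm2 /ip /Rintegral.
under [in RHS]eq_integral do rewrite -expr2.
by rewrite fineK //; exact: integrable_fin_num.
Qed.

Lemma measurable_outer (u : R -> R) : measurable_fun setT u -> measurable_fun setT (outer u).
Proof.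
move=> mu'; apply: measurable_funM.
- exact: measurableT_comp mu' measurable_fst.
- exact: measurableT_comp mu' measurable_snd.
Qed.

Lemma integral_outer_sqr (u : R -> R) : L2 u ->
  (\int[mu2]_p (outer u p ^+ 2)%:E)%E = (nrm2 u ^+ 2)%:E.
Proof.
move=> hu; have [mu' iu] := hu.
have mo : measurable_fun setT (fun p => (outer u p ^+ 2)%:E).
  by apply/measurable_EFinP; apply: measurable_funX; exact: measurable_outer.
rewrite /Defs.mu2 (@fubini_tonelli1 _ _ _ _ _ mu mu _ mo); last first.
  by move=> p; rewrite lee_fin sqr_ge0.
transitivity (\int[mu]_x ((u x ^+ 2)%:E * (nrm2 u)%:E))%E.
  apply: eq_integral => x _; rewrite /fubini_F -L2_integral_sqr // -ge0_integralZl_EFin //.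
  - by apply: eq_integral => y _; rewrite /outer /= exprMn EFinM.
  - by move=> y _; rewrite lee_fin sqr_ge0.
  - by apply/measurable_EFinP; exact: measurable_funX.
  - exact: sqr_ge0.
by rewrite integralZr // L2_integral_sqr // -EFinM expr2.
Qed.

Lemma L2_2_outer (u : R -> R) : L2 u -> L2_2 (outer u).
Proof.
move=> hu; have mo := measurable_outer hu.1.
split => //; apply/integrableP; split.
  by apply/measurable_EFinP; exact: measurable_funX.
under eq_integral do rewrite gee0_abs ?lee_fin ?sqr_ge0 //.
by rewrite integral_outer_sqr // ltry.
Qed.

Lemma L2Z (c : R) (u : R -> R) : L2 u -> L2 (fun x => c * u x).
Proof.
move=> [mu' iu]; split; first exact: measurable_funM.
apply: (eq_integrable measurableT _ _ _ (integrableZl measurableT (c ^+ 2) iu)) => x _.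
by rewrite exprMn EFinM.
Qed.

Lemma nrm2Z (c : R) (u : R -> R) : L2 u -> nrm2 (fun x => c * u x) = c ^+ 2 * nrm2 u.
Proof.
move=> [_ iu]; rewrite /nrm2 /ip -RintegralZl //.
by apply: eq_Rintegral => x _; rewrite mulrACA expr2.
Qed.

Lemma nrm2_eq0 (u : R -> R) : L2 u -> nrm2 u = 0 -> {ae mu, forall x, u x = 0}.
Proof.
move=> hu u0.
have msqr : measurable_fun setT (fun x => (u x ^+ 2)%:E).
  by apply/measurable_EFinP; apply: measurable_funX; exact: hu.1.
have : (\int[mu]_x `|(u x ^+ 2)%:E|)%E = 0%E.
  under eq_integral do rewrite gee0_abs ?lee_fin ?sqr_ge0 //.
  by rewrite L2_integral_sqr // u0.
move/(ae_eq_integral_abs mu measurableT msqr).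
by apply: filterS => x /(_ I) /= [/eqP]; rewrite sqrf_eq0 => /eqP.
Qed.

Lemma integrable_L2_2_mul (X Y : R * R -> R) : L2_2 X -> L2_2 Y ->
  mu2.-integrable setT (EFin \o fun p => X p * Y p).
Proof.
move=> [mX iX] [mY iY]; apply: le_integrable (integrableD measurableT iX iY) => //.
- by apply/measurable_EFinP; exact: measurable_funM.
- by move=> p _ /=; rewrite lee_fin (le_trans (normrM_le_sqrD _ _)) // ler_norm.
Qed.

End L2_facts.

Section quadratic_form.
Context {R : realType}.
Local Notation mu := (@lebesgue_measure R).
Local Notation mu2 := (@mu2 R).
Variable X : R * R -> R.
Hypothesis hX : L2_2 X.

Definition qform (u : R -> R) : R := \int[mu2]_p (X p * outer u p).

Let integrable_qform (u : R -> R) : L2 u ->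
  mu2.-integrable setT (EFin \o fun p => X p * outer u p).
Proof. by move=> hu; apply: integrable_L2_2_mul hX (L2_2_outer hu). Qed.

Lemma mulTXE (u : R -> R) : L2 u ->
  (fun s => u s * TX X u s) = (fun s => \int[mu]_t (X (s, t) * outer u (s, t))).
Proof.
move=> hu; apply/funext => s; rewrite /TX -RintegralZl_measurable //.
  by apply: eq_Rintegral => t _; rewrite /outer /= mulrCA.
by apply: measurable_funM; [exact: measurableT_comp hX.1 _ | exact: hu.1].
Qed.

Lemma mulTXadjE (u : R -> R) : L2 u ->
  (fun t => u t * TXadj X u t) = (fun t => \int[mu]_s (X (s, t) * outer u (s, t))).
Proof.
move=> hu; apply/funext => t; rewrite /TXadj -RintegralZl_measurable //.
  by apply: eq_Rintegral => s _; rewrite /outer /= mulrCA [u t * _]mulrC.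
by apply: measurable_funM; [exact: measurableT_comp hX.1 _ | exact: hu.1].
Qed.

Lemma integrable_mulTX (u : R -> R) : L2 u ->
  mu.-integrable setT (EFin \o fun s => u s * TX X u s).
Proof.
by move=> hu; rewrite (mulTXE hu); exact: integrable_Rintegral1 (integrable_qform hu).
Qed.

Lemma integrable_mulTXadj (u : R -> R) : L2 u ->
  mu.-integrable setT (EFin \o fun t => u t * TXadj X u t).
Proof.
by move=> hu; rewrite (mulTXadjE hu); exact: integrable_Rintegral2 (integrable_qform hu).
Qed.

Lemma ip_TX (u : R -> R) : L2 u -> ip u (TX X u) = qform u.
Proof.
by move=> hu; rewrite /ip (mulTXE hu) (Rintegral12_prod_meas1 (integrable_qform hu)).
Qed.

Lemma obj2E (u : R -> R) : L2 u -> obj2 X u = 2 * qform u.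
Proof.
move=> hu; have iF := integrable_qform hu.
rewrite /obj2 /ip; under eq_Rintegral do rewrite mulrDr.
rewrite RintegralD ?integrable_mulTX ?integrable_mulTXadj // (mulTXE hu) (mulTXadjE hu).
rewrite (Rintegral12_prod_meas1 iF) (Rintegral21_prod_meas1 iF) -/(qform u).
by rewrite mulr_natl mulr2n.
Qed.

Lemma obj1E (u : R -> R) : L2 u ->
  obj1 X u = 2^-1 * \int[mu2]_p (X p ^+ 2) - qform u + 2^-1 * nrm2 u ^+ 2.
Proof.
move=> hu; have iX2 := hX.2; have iXu := integrable_qform hu.
have iu2 := (L2_2_outer hu).2.
have i2Xu : mu2.-integrable setT (EFin \o fun p => 2 * (X p * outer u p)).
  apply: (eq_integrable measurableT _ _ _ (integrableZl measurableT 2 iXu)).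
  by move=> p _; rewrite /= EFinM.
rewrite /obj1; have -> : (fun p => (X p - outer u p) ^+ 2) =
    (fun p => X p ^+ 2 - 2 * (X p * outer u p) + outer u p ^+ 2).
  by apply/funext => p; ring.
rewrite RintegralD //; last first.
  apply: (eq_integrable measurableT _ _ _ (integrableB measurableT iX2 i2Xu)).
  by move=> p _; rewrite /= EFinB.
rewrite RintegralB // RintegralZl // -/(qform u).
rewrite /Rintegral (integral_outer_sqr hu) /=.
by rewrite mulrDr mulrBr mulrA mulVf ?pnatr_eq0 // mul1r.
Qed.

Lemma qformZ (c : R) (u : R -> R) : L2 u -> qform (fun x => c * u x) = c ^+ 2 * qform u.
Proof.
move=> hu; rewrite /qform -RintegralZl //; last exact: integrable_qform.
by apply: eq_Rintegral => p _; rewrite /outer; ring.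
Qed.

Lemma qform_ae0 (u : R -> R) : L2 u -> {ae mu, forall x, u x = 0} -> qform u = 0.
Proof.
move=> hu u0; rewrite -ip_TX // /ip /Rintegral (ae_eq_integral (cst 0%E)) ?integral0 //.
- exact: measurable_int _ (integrable_mulTX hu).
- apply: (filterS (Filter := ae_filter_ringOfSetsType mu) _ u0) => x ux _.
  by rewrite /= ux mul0r.
Qed.

End quadratic_form.

Section maximizer.
Context {R : realType}.
Variables (X : R * R -> R) (u : R -> R).
Hypotheses (hX : L2_2 X) (hu : L2 u) (hu1 : nrm2 u = 1).
Hypothesis u_max : forall y, L2 y -> nrm2 y = 1 -> qform X y <= qform X u.

Lemma qform_le_nrm2_max (y : R -> R) : L2 y -> qform X y <= nrm2 y * qform X u.
Proof.
move=> hy; have [y0|y_neq0] := eqVneq (nrm2 y) 0.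
  by rewrite y0 mul0r (qform_ae0 hX hy (nrm2_eq0 hy y0)).
have y_gt0 : 0 < nrm2 y by rewrite lt_def y_neq0 nrm2_ge0.
pose k := (Num.sqrt (nrm2 y))^-1.
have k2 : k ^+ 2 = (nrm2 y)^-1 by rewrite exprVn sqr_sqrtr ?ltW.
have := u_max (L2Z k hy); rewrite nrm2Z // (qformZ hX) // k2 mulVf ?gt_eqF // => /(_ erefl).
by rewrite ler_pdivrMl.
Qed.

Lemma qform_max_ge0 (v : R -> R) : L2 v -> ~ {ae (@lebesgue_measure R), forall x, v x = 0} ->
    0 <= ip v (TX X v) -> 0 <= qform X u.
Proof.
move=> hv v_neq0 v_ge0.
have v_gt0 : 0 < nrm2 v.
  by rewrite lt_def nrm2_ge0 andbT; apply/eqP => /(nrm2_eq0 hv).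
rewrite -(pmulr_rge0 _ v_gt0); apply: le_trans (qform_le_nrm2_max hv).
by rewrite -(ip_TX hX hv).
Qed.

Lemma obj1_scaled_max_le : 0 <= qform X u ->
  forall y, L2 y -> obj1 X (fun x => Num.sqrt (qform X u) * u x) <= obj1 X y.
Proof.
move=> q_ge0 y hy; rewrite !(obj1E hX) //; last exact: L2Z.
rewrite (qformZ hX) // nrm2Z // sqr_sqrtr // hu1 mulr1.
have := qform_le_nrm2_max hy; have := sqr_ge0 (nrm2 y - qform X u); nra.
Qed.

End maximizer.

Theorem mainTheorem20 (R : realType) (X : R * R -> R) :
  L2_2 X ->
  (exists v : R -> R, L2 v /\ ~ {ae (@lebesgue_measure R), forall x, v x = 0}
                      /\ 0 <= ip v (TX X v)) ->
  forall u : R -> R, L2 u -> nrm2 u = 1 ->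
  (forall u' : R -> R, L2 u' -> nrm2 u' = 1 -> obj2 X u' <= obj2 X u) ->
  exists w : R -> R,
    L2 w /\
    (forall y : R -> R, L2 y -> obj1 X w <= obj1 X y) /\
    {ae (@mu2 R), forall p, (2^-1 * obj2 X u) * outer u p = outer w p}.
Proof.
move=> hX [v [hv [v_neq0 v_ge0]]] u hu hu1 u_max.
have q_max y : L2 y -> nrm2 y = 1 -> qform X y <= qform X u.
  by move=> hy hy1; have := u_max y hy hy1; rewrite !(obj2E hX) // ler_pM2l.
have q_ge0 := qform_max_ge0 hX q_max hv v_neq0 v_ge0.
exists (fun x => Num.sqrt (qform X u) * u x); split; first exact: L2Z.
split; first exact: obj1_scaled_max_le hX hu hu1 q_max q_ge0.
apply: aeW => p; rewrite (obj2E hX) // /outer /= -{1}(sqr_sqrtr q_ge0).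
by field.
Qed.
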